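(* Let $k\ge1$ be odd and $\Gamma_1=\mathbf{PSL}(2,\mathbb{Z}[i])$. Let $S=\begin{psmallmatrix}0&-1\\1&0\end{psmallmatrix}$, $T=\begin{psmallmatrix}1&1\\0&1\end{psmallmatrix}$, $T_\omega=\begin{psmallmatrix}1&i\\0&1\end{psmallmatrix}$, $L=\begin{psmallmatrix}i&0\\0&-i\end{psmallmatrix}$, $U=TS$, $E=T_\omega SL$. Let $C_p(\Gamma_1,V_{k,k})$ be the space of maps $f:\Gamma_1\to V_{k,k}$ with $f(\gamma_1\gamma_2)=f(\gamma_1)|\gamma_2+f(\gamma_2)$ for all $\gamma_1,\gamma_2\in\Gamma_1$ and $f(T)=f(T_\omega)=f(L)=0$, and let $$W_{k,k}=\ker(\mathbf{1}+S)\cap\ker(\mathbf{1}-L)\cap\ker(\mathbf{1}+U+U^2)\cap\ker(\mathbf{1}+E+E^2)\subset V_{k,k}.$$ Then $f\mapsto f(S)$ is a $\mathbb{C}$-linear isomorphism $C_p(\Gamma_1,V_{k,k})\to W_{k,k}$.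
   Context: $V_{k,k}$ is the space of polynomials $\sum_{0\le i,j\le k}c_{ij}z^i\bar z^j$ ($c_{ij}\in\mathbb{C}$, $z,\bar z$ independent variables) with right action of $\gamma=\begin{psmallmatrix}a&b\\c&e\end{psmallmatrix}$: $(P|\gamma)(z,\bar z)=(cz+e)^k\overline{(cz+e)}^kP\!\left(\frac{az+b}{cz+e},\frac{\bar a\bar z+\bar b}{\bar c\bar z+\bar e}\right)$, extended linearly to the group ring; $\ker(X)=\{P\in V_{k,k}:P|X=0\}$. *)

From HB Require Import structures.
From mathcomp Require Import all_boot all_order all_algebra.
From mathcomp Require Import complex.
From mathcomp Require Import reals.
Set Implicit Arguments. Unset Strict Implicit. Unset Printing Implicit Defensive.
Import Order.TTheory GRing.Theory Num.Theory.
Local Open Scope ring_scope.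
Local Open Scope complex_scope.

Section Defs.
Variable R : realType.
Local Notation C := R[i].

Definition gaussInt (z : C) : Prop :=
  exists a b : int, z = Complex (a%:~R) (b%:~R).

Definition inSL2Zi (g : 'M[C]_2) : Prop :=
  (forall i j, gaussInt (g i j)) /\ \det g = 1.

Definition mx2 (a b c d : C) : 'M[C]_2 :=
  \matrix_(i < 2, j < 2)
    if val i == 0%N then (if val j == 0%N then a else b)
    else (if val j == 0%N then c else d).

Definition Smx  : 'M[C]_2 := mx2 0 (-1) 1 0.
Definition Tmx  : 'M[C]_2 := mx2 1 1 0 1.
Definition Twmx : 'M[C]_2 := mx2 1 'i 0 1.
Definition Lmx  : 'M[C]_2 := mx2 'i 0 0 (-'i).
Definition Umx  : 'M[C]_2 := Tmx *m Smx.
Definition Emx  : 'M[C]_2 := Twmx *m Smx *m Lmx.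

(* V_{k,k}: the polynomial sum_{0<=i,j<=k} c_ij z^i zbar^j is represented by
   its coefficient matrix (c_ij) in 'M[C]_(k.+1, k.+1). *)
Definition Vkk (k : nat) := 'M[C]_(k.+1, k.+1).

Definition slash_factor (k : nat) (a b c e : C) (i : nat) : {poly C} :=
  (a *: 'X + b%:P) ^+ i * (c *: 'X + e%:P) ^+ (k - i).

(* Right action (P|g)(z,zb) = (cz+e)^k conj(cz+e)^k P((az+b)/(cz+e), conj...)
   written out on coefficients:
   P|g = sum_{i,j} c_ij (az+b)^i (cz+e)^(k-i) (conj(a) zb + conj(b))^j (conj(c) zb + conj(e))^(k-j). *)
Definition slash (k : nat) (P : Vkk k) (g : 'M[C]_2) : Vkk k :=
  let a := g 0 0 in let b := g 0 1 in let c := g 1 0 in let e := g 1 1 in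
  \matrix_(m < k.+1, n < k.+1)
    \sum_(i < k.+1) \sum_(j < k.+1)
      P i j * (slash_factor k a b c e i)`_m
            * (slash_factor k (conjc a) (conjc b) (conjc c) (conjc e) j)`_n.

Definition inW (k : nat) (P : Vkk k) : Prop :=
  [/\ P + slash P Smx = 0,
      P - slash P Lmx = 0,
      P + slash P Umx + slash P (Umx *m Umx) = 0 &
      P + slash P Emx + slash P (Emx *m Emx) = 0].

(* C_p(Gamma_1, V_{k,k}) with Gamma_1 = PSL(2,Z[i]): a map on PSL(2,Z[i]) is
   encoded as a map f on 2x2 complex matrices, of which only the values on
   SL(2,Z[i]) matter, with f(-g) = f(g) (so it factors through PSL). *)
Definition inCp (k : nat) (f : 'M[C]_2 -> Vkk k) : Prop :=
  [/\ (forall g, inSL2Zi g -> f (- g) = f g),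
      (forall g1 g2, inSL2Zi g1 -> inSL2Zi g2 ->
         f (g1 *m g2) = slash (f g1) g2 + f g2),
      f Tmx = 0, f Twmx = 0 & f Lmx = 0].

End Defs.

From HB Require Import structures.
From mathcomp Require Import all_boot all_order all_algebra.
From mathcomp Require Import complex.
From mathcomp Require Import reals.
From mathcomp Require Import ring zify.
Set Implicit Arguments. Unset Strict Implicit. Unset Printing Implicit Defensive.
Import Order.TTheory GRing.Theory Num.Theory.
Local Open Scope ring_scope.

(* PSL(2,Z[i]) is generated by S, L and the translations T_n (n in Z[i]), because of
   the Euclidean algorithm in Z[i]: g T_n S has bottom row (c n + d, -c), and a
   rounding of -d/c to a Gaussian integer n gives |c n + d| < |c|.  A cocycle f
   vanishing on T, T_i and L is therefore determined by P = f(S), and the relations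
   S^2 = -1, S L = -L S, U^3 = -1 and E^3 = 1 force P into W_{k,k}.

   Conversely, given P in W_{k,k}, define psi(g), the would-be value of f(g)|g^-1,
   along that Euclidean descent, and put f(g) = psi(g)|g.  By induction on |c|^2 one
   shows that psi does not depend on the rounding chosen (two admissible n are joined
   by unit steps n -> n + 1, n -> n + i, which the relations for U and E absorb), that
   psi is invariant under right multiplication by T_n, L and -1, and that
   psi(g S) = psi(g) - P|g^-1.  Hence psi(g h) = psi(g) + psi(h)|g^-1, which says
   exactly that f is a cocycle. *)

(* Z[i] and 2x2 matrices over it as concrete records: every identity between such
   matrices reduces, after destructuring, to polynomial identities over [int]. *)
Record gauss := Gauss { gre : int; gim : int }.

Definition gadd x y := Gauss (gre x + gre y) (gim x + gim y).
Definition gopp x := Gauss (- gre x) (- gim x).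
Definition gmul x y :=
  Gauss (gre x * gre y - gim x * gim y) (gre x * gim y + gim x * gre y).
Definition gauss_norm x : int := gre x ^+ 2 + gim x ^+ 2.
Definition g0 := Gauss 0 0.
Definition g1 := Gauss 1 0.
Definition gI := Gauss 0 1.

Record gmx := Gmx { ma : gauss; mb : gauss; mc : gauss; md : gauss }.

Definition gmx_mul g h :=
  Gmx (gadd (gmul (ma g) (ma h)) (gmul (mb g) (mc h)))
      (gadd (gmul (ma g) (mb h)) (gmul (mb g) (md h)))
      (gadd (gmul (mc g) (ma h)) (gmul (md g) (mc h)))
      (gadd (gmul (mc g) (mb h)) (gmul (md g) (md h))).
Infix "**" := gmx_mul (at level 40, left associativity).

Definition gmx_opp g := Gmx (gopp (ma g)) (gopp (mb g)) (gopp (mc g)) (gopp (md g)).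
Definition gmx_adj g := Gmx (md g) (gopp (mb g)) (gopp (mc g)) (ma g).
Definition gmx_det g := gadd (gmul (ma g) (md g)) (gopp (gmul (mb g) (mc g))).
Definition gmx1 := Gmx g1 g0 g0 g1.
Definition gT n := Gmx g1 n g0 g1.
Definition gS := Gmx g0 (gopp g1) g1 g0.
Definition gL := Gmx gI g0 g0 (gopp gI).
Definition gU := gT g1 ** gS.
Definition gE := gT gI ** gS ** gL.

Definition sl2 g := gmx_det g = g1.
Definition cnorm g := gauss_norm (mc g).
Definition dnorm g := gauss_norm (md g).

Lemma gauss_ext x y : gre x = gre y -> gim x = gim y -> x = y.
Proof. by case: x y => [? ?] [? ?] /= -> ->. Qed.

Lemma gmx_ext g h :
  gre (ma g) = gre (ma h) -> gim (ma g) = gim (ma h) ->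
  gre (mb g) = gre (mb h) -> gim (mb g) = gim (mb h) ->
  gre (mc g) = gre (mc h) -> gim (mc g) = gim (mc h) ->
  gre (md g) = gre (md h) -> gim (md g) = gim (md h) -> g = h.
Proof. by case: g h => [[? ?] [? ?] [? ?] [? ?]] [[? ?] [? ?] [? ?] [? ?]] /= -> -> -> -> -> -> -> ->. Qed.

(* Projecting to the 8 integer entries before simplifying matters: unfolding a
   product of several matrices as a whole duplicates subterms exponentially. *)
Ltac gauss_ring :=
  repeat match goal with
  | x : gmx |- _ => destruct x as [[? ?] [? ?] [? ?] [? ?]]
  | x : gauss |- _ => destruct x as [? ?]
  end;
  rewrite /sl2 /cnorm /dnorm /gauss_norm /gU /gE;
  first [ apply: gmx_ext => /=; ring | apply: gauss_ext => /=; ring | rewrite /=; ring ].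

Lemma gauss_norm_ge0 x : 0 <= gauss_norm x.
Proof. by rewrite addr_ge0 ?sqr_ge0. Qed.

Lemma gauss_norm_eq0 x : gauss_norm x = 0 -> x = g0.
Proof.
case: x => a b; rewrite /gauss_norm /= => h.
by have [-> ->] : a = 0 /\ b = 0 by split; nia.
Qed.

Lemma gauss_norm_mul x y : gauss_norm (gmul x y) = gauss_norm x * gauss_norm y.
Proof. by gauss_ring. Qed.

Lemma gmx_mulA x y z : x ** (y ** z) = x ** y ** z.
Proof. by gauss_ring. Qed.
Lemma gmx_mul1 x : x ** gmx1 = x.
Proof. by gauss_ring. Qed.
Lemma gmx_mulN x y : x ** gmx_opp y = gmx_opp (x ** y).
Proof. by gauss_ring. Qed.
Lemma gmx_adjM x y : gmx_adj (x ** y) = gmx_adj y ** gmx_adj x.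
Proof. by gauss_ring. Qed.
Lemma gmx_detM x y : gmx_det (x ** y) = gmul (gmx_det x) (gmx_det y).
Proof. by gauss_ring. Qed.

Lemma gmx_mul_adj g : sl2 g -> g ** gmx_adj g = gmx1.
Proof.
have -> : g ** gmx_adj g = Gmx (gmx_det g) g0 g0 (gmx_det g) by gauss_ring.
by move=> ->.
Qed.

Lemma gmx_adjK g h : sl2 g -> gmx_adj g ** (g ** h) = h.
Proof.
have -> : gmx_adj g ** (g ** h) =
  Gmx (gmul (gmx_det g) (ma h)) (gmul (gmx_det g) (mb h))
      (gmul (gmx_det g) (mc h)) (gmul (gmx_det g) (md h)) by gauss_ring.
by move=> ->; gauss_ring.
Qed.

Lemma sl2M x y : sl2 x -> sl2 y -> sl2 (x ** y).
Proof. by rewrite /sl2 gmx_detM => -> ->. Qed.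
Lemma sl2N x : sl2 x -> sl2 (gmx_opp x).
Proof. by rewrite /sl2 => <-; gauss_ring. Qed.
Lemma sl2_adj x : sl2 x -> sl2 (gmx_adj x).
Proof. by rewrite /sl2 => <-; gauss_ring. Qed.
Lemma sl2_1 : sl2 gmx1. Proof. by gauss_ring. Qed.
Lemma sl2T n : sl2 (gT n). Proof. by gauss_ring. Qed.
Lemma sl2S : sl2 gS. Proof. by gauss_ring. Qed.
Lemma sl2L : sl2 gL. Proof. by gauss_ring. Qed.

Ltac sl2_auto := repeat match goal with
  | |- sl2 (_ ** _) => apply: sl2M
  | |- sl2 (gmx_opp _) => apply: sl2N
  | |- sl2 (gmx_adj _) => apply: sl2_adj
  | |- sl2 gmx1 => exact: sl2_1
  | |- sl2 (gT _) => exact: sl2T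
  | |- sl2 gS => exact: sl2S
  | |- sl2 gL => exact: sl2L
  end; try assumption.

Lemma cnorm_ge0 g : 0 <= cnorm g. Proof. exact: gauss_norm_ge0. Qed.
Lemma dnorm_ge0 g : 0 <= dnorm g. Proof. exact: gauss_norm_ge0. Qed.
Lemma cnormT g n : cnorm (g ** gT n) = cnorm g. Proof. by gauss_ring. Qed.
Lemma cnormL g : cnorm (g ** gL) = cnorm g. Proof. by gauss_ring. Qed.
Lemma dnormL g : dnorm (g ** gL) = dnorm g. Proof. by gauss_ring. Qed.
Lemma cnormN g : cnorm (gmx_opp g) = cnorm g. Proof. by gauss_ring. Qed.
Lemma cnormS g : cnorm (g ** gS) = dnorm g. Proof. by gauss_ring. Qed.
Lemma dnormS g : dnorm (g ** gS) = cnorm g. Proof. by gauss_ring. Qed.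

Definition reduces g n := dnorm (g ** gT n) < cnorm g.

Lemma dnormT g n : dnorm (g ** gT n) = gauss_norm (gadd (gmul (mc g) n) (md g)).
Proof. by gauss_ring. Qed.

Lemma round_div_sqr (X N : int) : 0 < N ->
  4 * (X - ((2 * X + N) %/ (2 * N))%Z * N) ^+ 2 <= N ^+ 2.
Proof.
move=> N0; have N2 : 2 * N != 0 by rewrite mulf_neq0 ?gt_eqF.
have e := divz_eq (2 * X + N) (2 * N).
have r0 := modz_ge0 (2 * X + N) N2.
have r1 : ((2 * X + N) %% (2 * N))%Z < 2 * N by apply: ltz_pmod; lia.
move: e r0 r1; set q := (_ %/ _)%Z; set r := (_ %% _)%Z => e r0 r1.
have -> : 4 * (X - q * N) ^+ 2 = (r - N) ^+ 2.
  have -> : r - N = 2 * (X - q * N) by lia.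
  by ring.
have : 0 <= r * (2 * N - r) by apply: mulr_ge0; lia.
by clearbody r; nia.
Qed.

(* [nearest g] is minus the Gaussian integer closest to [d / c = d conj(c) / |c|^2]. *)
Definition nearest g : gauss :=
  let c := mc g in let d := md g in let N := gauss_norm c in
  let X := gre d * gre c + gim d * gim c in
  let Y := gim d * gre c - gre d * gim c in
  Gauss (- ((2 * X + N) %/ (2 * N))%Z) (- ((2 * Y + N) %/ (2 * N))%Z).

Lemma nearest_reduces g : cnorm g != 0 -> reduces g (nearest g).
Proof.
rewrite /reduces dnormT /cnorm /nearest => cN.
have N0 : 0 < gauss_norm (mc g) by rewrite lt0r cN gauss_norm_ge0.
set c := mc g in N0 *; set d := md g; set N := gauss_norm c.
set X := _ + _ * gim c; set Y := _ - _ * gim c.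
have bX := round_div_sqr X N0; have bY := round_div_sqr Y N0.
set q1 := ((2 * X + N) %/ _)%Z in bX *; set q2 := ((2 * Y + N) %/ _)%Z in bY *.
have key : N * gauss_norm (gadd (gmul c (Gauss (- q1) (- q2))) d) =
           (X - q1 * N) ^+ 2 + (Y - q2 * N) ^+ 2 by rewrite /N /X /Y; gauss_ring.
move: key bX bY (gauss_norm_ge0 (gadd (gmul c (Gauss (- q1) (- q2))) d)).
set G := gauss_norm _; set A := (X - _) ^+ 2; set B := (Y - _) ^+ 2.
by clearbody G A B; nia.
Qed.

Lemma reduces_close g n m : reduces g n -> reduces g m ->
  (gre m - gre n) ^+ 2 <= 1 /\ (gim m - gim n) ^+ 2 <= 1.
Proof.
rewrite /reduces !dnormT /cnorm => rn rm.
set v := gadd (gmul (mc g) n) (md g) in rn; set w := gadd (gmul (mc g) m) (md g) in rm.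
have par : gauss_norm (gadd w (gopp v)) + gauss_norm (gadd w v) =
           2 * gauss_norm v + 2 * gauss_norm w by gauss_ring.
have diff : gauss_norm (gadd w (gopp v)) =
    gauss_norm (mc g) * ((gre m - gre n) ^+ 2 + (gim m - gim n) ^+ 2) by rewrite /v /w; gauss_ring.
have : (gre m - gre n) ^+ 2 + (gim m - gim n) ^+ 2 < 4.
  move: par diff rn rm (gauss_norm_ge0 (gadd w v)) (gauss_norm_ge0 v) (gauss_norm_ge0 w).
  set A := gauss_norm (gadd w (gopp v)); set Q := (_ + _ ^+ 2).
  by clearbody A Q; nia.
set x := gre m - gre n; set y := gim m - gim n; clearbody x y => lt4.
have [x2 y2] := (sqr_ge0 x, sqr_ge0 y).
have [bx by'] : -1 <= x <= 1 /\ -1 <= y <= 1 by split; apply/andP; split; nia.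
by split; nia.
Qed.

Lemma reduces_mid g n s t : reduces g n -> reduces g (gadd n (Gauss s t)) ->
  reduces g (gadd n (Gauss s 0)) \/ reduces g (gadd n (Gauss 0 t)).
Proof.
rewrite /reduces !dnormT.
have : gauss_norm (gadd (gmul (mc g) (gadd n (Gauss s 0))) (md g)) +
       gauss_norm (gadd (gmul (mc g) (gadd n (Gauss 0 t))) (md g)) =
       gauss_norm (gadd (gmul (mc g) n) (md g)) +
       gauss_norm (gadd (gmul (mc g) (gadd n (Gauss s t))) (md g)) by gauss_ring.
set A := gauss_norm _; set B := gauss_norm _; set C := gauss_norm _; set D := gauss_norm _.
by clearbody A B C D; lia.
Qed.

Lemma reduces_unit_path g (Q : gauss -> Prop) :
  (forall n s t, s ^+ 2 + t ^+ 2 = 1 -> reduces g n -> reduces g (gadd n (Gauss s t)) ->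
     Q n -> Q (gadd n (Gauss s t))) ->
  forall n m, reduces g n -> reduces g m -> Q n -> Q m.
Proof.
move=> step n m rn rm Qn.
have [bs bt] := reduces_close rn rm.
have em : m = gadd n (Gauss (gre m - gre n) (gim m - gim n)) by gauss_ring.
rewrite em in rm *; move: bs bt rm; move: (gre m - gre n) (gim m - gim n) => s t bs bt rm.
have [s2 t2] := (sqr_ge0 s, sqr_ge0 t).
case: (boolP (s ^+ 2 + t ^+ 2 == 0)) => [/eqP st0|st0].
  have [-> ->] : s = 0 /\ t = 0 by split; nia.
  by have -> : gadd n (Gauss 0 0) = n by gauss_ring.
case: (boolP (s ^+ 2 + t ^+ 2 == 1)) => [/eqP st1|st1]; first exact: step.
have [s1 t1] : s ^+ 2 = 1 /\ t ^+ 2 = 1.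
  by move: bs bt s2 t2 st0 st1; set a := s ^+ 2; set b := t ^+ 2; clearbody a b; lia.
case: (reduces_mid rn rm) => [rs|rt].
- have Qs : Q (gadd n (Gauss s 0)) by apply: (step) => //; rewrite s1 expr2 mul0r addr0.
  have e : gadd n (Gauss s t) = gadd (gadd n (Gauss s 0)) (Gauss 0 t) by gauss_ring.
  by rewrite e in rm *; apply: (step) => //; rewrite t1 expr2 mul0r add0r.
- have Qt : Q (gadd n (Gauss 0 t)) by apply: (step) => //; rewrite t1 expr2 mul0r add0r.
  have e : gadd n (Gauss s t) = gadd (gadd n (Gauss 0 t)) (Gauss s 0) by gauss_ring.
  by rewrite e in rm *; apply: (step) => //; rewrite s1 expr2 mul0r addr0.
Qed.

Lemma reduces_unit g : cnorm g = dnorm g -> 0 < cnorm g ->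
  [\/ reduces g g1, reduces g (gopp g1), reduces g gI | reduces g (gopp gI)].
Proof.
rewrite /reduces !dnormT /cnorm /dnorm => eN c0.
set X := gre (md g) * gre (mc g) + gim (md g) * gim (mc g).
set Y := gim (md g) * gre (mc g) - gre (md g) * gim (mc g).
have e1 : gauss_norm (gadd (gmul (mc g) g1) (md g)) = gauss_norm (mc g) + gauss_norm (md g) + 2 * X.
  by rewrite /X; gauss_ring.
have e2 : gauss_norm (gadd (gmul (mc g) (gopp g1)) (md g)) = gauss_norm (mc g) + gauss_norm (md g) - 2 * X.
  by rewrite /X; gauss_ring.
have e3 : gauss_norm (gadd (gmul (mc g) gI) (md g)) = gauss_norm (mc g) + gauss_norm (md g) + 2 * Y.
  by rewrite /Y; gauss_ring.
have e4 : gauss_norm (gadd (gmul (mc g) (gopp gI)) (md g)) = gauss_norm (mc g) + gauss_norm (md g) - 2 * Y.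
  by rewrite /Y; gauss_ring.
have XY : X ^+ 2 + Y ^+ 2 = gauss_norm (mc g) ^+ 2.
  by rewrite [in RHS]expr2 {2}eN /X /Y; gauss_ring.
rewrite e1 e2 e3 e4 -eN; move: XY c0; set N := gauss_norm _; clearbody X Y N => XY c0.
have [h1|h1] := boolP (N + N + 2 * X < N); first by constructor 1.
have [h2|h2] := boolP (N + N - 2 * X < N); first by constructor 2.
have [h3|h3] := boolP (N + N + 2 * Y < N); first by constructor 3.
have [h4|h4] := boolP (N + N - 2 * Y < N); first by constructor 4.
rewrite -!leNgt in h1 h2 h3 h4.
have hX : 4 * X ^+ 2 <= N ^+ 2.
  have : 0 <= (N - 2 * X) * (N + 2 * X) by apply: mulr_ge0; lia.
  nia.
have hY : 4 * Y ^+ 2 <= N ^+ 2.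
  have : 0 <= (N - 2 * Y) * (N + 2 * Y) by apply: mulr_ge0; lia.
  nia.
nia.
Qed.

Lemma reducesT g m n : reduces (g ** gT m) n = reduces g (gadd m n).
Proof.
rewrite /reduces cnormT; congr (_ < _).
by have -> : g ** gT m ** gT n = g ** gT (gadd m n) by gauss_ring.
Qed.

Lemma reducesL g n : reduces (g ** gL) n = reduces g (gopp n).
Proof. by rewrite /reduces cnormL !dnormT; congr (_ < _); gauss_ring. Qed.

Lemma reducesN g n : reduces (gmx_opp g) n = reduces g n.
Proof. by rewrite /reduces cnormN !dnormT; congr (_ < _); gauss_ring. Qed.

Lemma small_int (s : int) : s ^+ 2 <= 1 -> [\/ s = -1, s = 0 | s = 1].
Proof.
move=> h; have : (s == -1) || (s == 0) || (s == 1) by nia.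
by case/orP => [/orP [] /eqP|/eqP] ->; [constructor 1|constructor 2|constructor 3].
Qed.

Lemma gauss_unit_cases a d : gmul a d = g1 ->
  [\/ a = g1 /\ d = g1, a = gopp g1 /\ d = gopp g1,
      a = gI /\ d = gopp gI | a = gopp gI /\ d = gI].
Proof.
move=> ad.
have na : gauss_norm a = 1.
  have : gauss_norm a * gauss_norm d = 1 by rewrite -gauss_norm_mul ad; gauss_ring.
  move: (gauss_norm_ge0 a) (gauss_norm_ge0 d).
  set x := gauss_norm a; set y := gauss_norm d; clearbody x y => x0 y0 xy.
  have : 0 < x by rewrite lt0r x0 andbT; apply: contra_eq_neq xy => ->; rewrite mul0r.
  have : 0 < y by rewrite lt0r y0 andbT; apply: contra_eq_neq xy => ->; rewrite mulr0.
  nia.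
case: a d ad na => a1 a2 [d1 d2] [e1 e2]; rewrite /gauss_norm /= => na.
have [h1 h2] : a1 ^+ 2 <= 1 /\ a2 ^+ 2 <= 1 by split; nia.
case: (small_int h1) => -> in e1 e2 na *; case: (small_int h2) => -> in e1 e2 na *;
  rewrite ?expr2 in na; try lia.
- by constructor 2; split; rewrite /gopp /=; congr Gauss; lia.
- by constructor 4; split; rewrite /gopp /=; congr Gauss; lia.
- by constructor 3; split; rewrite /gopp /=; congr Gauss; lia.
- by constructor 1; split; rewrite /gopp /=; congr Gauss; lia.
Qed.

Lemma sl2_cnorm0 g : sl2 g -> cnorm g = 0 -> exists n,
  [\/ g = gT n, g = gmx_opp (gT n), g = gL ** gT n | g = gmx_opp (gL ** gT n)].
Proof.
case: g => a b c d; rewrite /sl2 /gmx_det /cnorm /= => dg /gauss_norm_eq0 c0.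
subst c; have ad : gmul a d = g1 by rewrite -dg; gauss_ring.
case: (gauss_unit_cases ad) => [[-> ->]|[-> ->]|[-> ->]|[-> ->]].
- by exists b; constructor 1; gauss_ring.
- by exists (gopp b); constructor 2; gauss_ring.
- by exists (gmul (gopp gI) b); constructor 3; gauss_ring.
- by exists (gmul gI b); constructor 4; gauss_ring.
Qed.

Lemma sl2_cdnorm0 g : sl2 g -> cnorm g = 0 -> dnorm g = 0 -> False.
Proof.
move=> dg /gauss_norm_eq0 c0 /gauss_norm_eq0 d0; move: dg.
by case: g c0 d0 => a b c d /= -> ->; rewrite /sl2 /gmx_det /=; case=> /=; lia.
Qed.

Lemma sl2_ind (Pr : gmx -> Prop) : Pr gmx1 ->
  (forall x, Pr x -> Pr (x ** gS)) -> (forall x n, Pr x -> Pr (x ** gT n)) ->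
  (forall x, Pr x -> Pr (x ** gL)) -> (forall x, Pr x -> Pr (gmx_opp x)) ->
  forall g, sl2 g -> Pr g.
Proof.
move=> P1 PS PT PL PN.
have PT1 n : Pr (gT n).
  have <- : gmx1 ** gT n = gT n by gauss_ring.
  exact: PT.
have PLT n : Pr (gL ** gT n).
  have <- : gmx1 ** gL ** gT n = gL ** gT n by gauss_ring.
  exact/PT/PL.
suff H k : forall g, sl2 g -> (absz (cnorm g) < k)%N -> Pr g.
  by move=> g dg; apply: (H (absz (cnorm g)).+1).
elim: k => [|k IH] g dg // hk.
have [/eqP c0|c0] := boolP (cnorm g == 0).
  have [n [] ->] := sl2_cnorm0 dg c0; [exact: PT1 | exact/PN/PT1 | exact: PLT | exact/PN/PLT].
have r := nearest_reduces c0; rewrite /reduces in r.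
move: (nearest g) r => n r.
have <- : gmx_opp (g ** gT n ** gS ** gS) ** gT (gopp n) = g by gauss_ring.
apply/PT/PN/PS/IH; first by sl2_auto.
by rewrite cnormS; move: (dnorm_ge0 (g ** gT n)) (cnorm_ge0 g) hk r; lia.
Qed.

Lemma gT_add m n : gT (gadd m n) = gT m ** gT n.
Proof. by gauss_ring. Qed.
Lemma gT_opp n : gT (gopp n) = gmx_adj (gT n).
Proof. by gauss_ring. Qed.

Lemma addr_rev3 (V : zmodType) (a b c : V) : a + b + c = c + b + a.
Proof. by rewrite addrC (addrC a) addrA. Qed.

Section GmxCocycles.
Variable V : zmodType.
Variable act : V -> gmx -> V.
Hypothesis act_add : forall u v g, act (u + v) g = act u g + act v g.
Hypothesis act_mul : forall v g h, act (act v g) h = act v (g ** h).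
Hypothesis act_1 : forall v, act v gmx1 = v.
Hypothesis act_opp_gmx : forall v g, act v (gmx_opp g) = act v g.

Lemma act_0 g : act 0 g = 0.
Proof. by apply: (@addrI _ (act 0 g)); rewrite -act_add !addr0. Qed.
Lemma act_opp v g : act (- v) g = - act v g.
Proof. by apply/eqP; rewrite -addr_eq0 -act_add addNr act_0. Qed.
Lemma act_sub u v g : act (u - v) g = act u g - act v g.
Proof. by rewrite act_add act_opp. Qed.

Definition gmx_cocycle (F : gmx -> V) :=
  [/\ forall g h, sl2 g -> sl2 h -> F (g ** h) = act (F g) h + F h,
      forall g, sl2 g -> F (gmx_opp g) = F g,
      F (gT g1) = 0, F (gT gI) = 0 & F gL = 0].

Definition period_relations (P : V) :=
  [/\ P + act P gS = 0, P - act P gL = 0,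
      P + act P gU + act P (gU ** gU) = 0 & P + act P gE + act P (gE ** gE) = 0].

Section Cocycle.
Variable F : gmx -> V.
Hypothesis F_cocycle : gmx_cocycle F.

Lemma cocycle1 : F gmx1 = 0.
Proof.
have [FM _ _ _ _] := F_cocycle.
have := FM _ _ sl2_1 sl2_1; rewrite gmx_mul1 act_1 -[LHS]addr0.
by move/addrI.
Qed.

Lemma cocycle_adj g : sl2 g -> F g = 0 -> F (gmx_adj g) = 0.
Proof.
have [FM _ _ _ _] := F_cocycle => dg Fg.
by have := FM _ _ dg (sl2_adj dg); rewrite gmx_mul_adj // cocycle1 Fg act_0 add0r.
Qed.

Lemma cocycle_T_int u : F (gT u) = 0 -> forall k : int, F (gT (gmul (Gauss k 0) u)) = 0.
Proof.
have [FM _ _ _ _] := F_cocycle => Fu.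
have Fnat (k : nat) : F (gT (gmul (Gauss k 0) u)) = 0.
  elim: k => [|k IH].
    by rewrite -cocycle1; congr F; gauss_ring.
  have -> : gT (gmul (Gauss k.+1 0) u) = gT (gmul (Gauss k 0) u) ** gT u.
    by rewrite -gT_add; congr gT; rewrite -[k.+1]addn1 PoszD; gauss_ring.
  by rewrite (FM _ _ (sl2T _) (sl2T _)) IH act_0 add0r.
case=> k; first exact: Fnat.
have -> : gT (gmul (Gauss (Negz k) 0) u) = gmx_adj (gT (gmul (Gauss k.+1 0) u)).
  by rewrite -gT_opp NegzE; congr gT; gauss_ring.
exact/cocycle_adj/Fnat/sl2T.
Qed.

Lemma cocycleT n : F (gT n) = 0.
Proof.
have [FM _ FT1 FTi _] := F_cocycle.
have -> : gT n = gT (gmul (Gauss (gre n) 0) g1) ** gT (gmul (Gauss (gim n) 0) gI).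
  by rewrite -gT_add; congr gT; gauss_ring.
by rewrite (FM _ _ (sl2T _) (sl2T _)) !cocycle_T_int // act_0 add0r.
Qed.

Lemma cocycle_period : period_relations (F gS).
Proof.
have [FM FN FT1 FTi FL] := F_cocycle.
have F_1 : F (gmx_opp gmx1) = 0 by rewrite (FN _ sl2_1) cocycle1.
set P := F gS.
have PL : act P gL = P.
  have := FM _ _ sl2S sl2L; rewrite FL addr0 => <-.
  have -> : gS ** gL = gmx_opp (gL ** gS) by gauss_ring.
  by rewrite (FN _ (sl2M sl2L sl2S)) (FM _ _ sl2L sl2S) FL act_0 add0r.
have [dU dE] : sl2 gU /\ sl2 gE by rewrite /gU /gE; split; sl2_auto.
have FU : F gU = P by rewrite /gU (FM _ _ (sl2T _) sl2S) FT1 act_0 add0r.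
have FE : F gE = P.
  by rewrite /gE (FM _ _ (sl2M (sl2T _) sl2S) sl2L) (FM _ _ (sl2T _) sl2S) FTi FL act_0 add0r addr0.
split.
- have := FM _ _ sl2S sl2S.
  have -> : gS ** gS = gmx_opp gmx1 by gauss_ring.
  by rewrite F_1 addrC => <-.
- by rewrite PL subrr.
- have := FM _ _ (sl2M dU dU) dU.
  have -> : gU ** gU ** gU = gmx_opp gmx1 by gauss_ring.
  by rewrite F_1 (FM _ _ dU dU) FU act_add act_mul addr_rev3 => <-.
- have := FM _ _ (sl2M dE dE) dE.
  have -> : gE ** gE ** gE = gmx1 by gauss_ring.
  by rewrite cocycle1 (FM _ _ dE dE) FE act_add act_mul addr_rev3 => <-.
Qed.

Lemma cocycle_eq0 : F gS = 0 -> forall g, sl2 g -> F g = 0.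
Proof.
have [FM FN _ _ FL] := F_cocycle => FS.
have step x y : sl2 x -> sl2 y -> F x = 0 -> F y = 0 -> F (x ** y) = 0.
  by move=> dx dy Fx Fy; rewrite FM // Fx Fy act_0 addr0.
suff H g : sl2 g -> sl2 g /\ F g = 0 by move=> g /H [].
apply: (sl2_ind (Pr := fun g => sl2 g /\ F g = 0)).
- by split; [exact: sl2_1 | exact: cocycle1].
- by move=> x [dx Fx]; split; [|apply: step]; sl2_auto.
- by move=> x n [dx Fx]; split; [|apply: step; rewrite ?cocycleT]; sl2_auto.
- by move=> x [dx Fx]; split; [|apply: step]; sl2_auto.
- by move=> x [dx Fx]; split; [sl2_auto | rewrite FN].
Qed.

End Cocycle.

Section Construction.
Variable P : V.
Hypothesis PS : P + act P gS = 0.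
Hypothesis PL : P - act P gL = 0.
Hypothesis PU : P + act P gU + act P (gU ** gU) = 0.
Hypothesis PE : P + act P gE + act P (gE ** gE) = 0.

Lemma act_PS : act P gS = - P.
Proof. by apply/eqP; rewrite -addr_eq0 addrC PS. Qed.
Lemma act_PL : act P gL = P.
Proof. by apply/eqP; rewrite eq_sym -subr_eq0 PL. Qed.
Lemma act_P_adjS : act P (gmx_adj gS) = - P.
Proof. have -> : gmx_adj gS = gmx_opp gS by gauss_ring. by rewrite act_opp_gmx act_PS. Qed.
Lemma act_P_adjL : act P (gmx_adj gL) = P.
Proof. have -> : gmx_adj gL = gmx_opp gL by gauss_ring. by rewrite act_opp_gmx act_PL. Qed.

(* The relations for U and E, in the form used by the unit steps n -> n + 1 and
   n -> n + i of the descent. *)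
Lemma act_P_relT Y :
  act P Y + act P (gT g1 ** gmx_adj gS ** Y) = act P (gmx_adj (gT g1) ** Y).
Proof.
rewrite -!(act_mul P _ Y) -act_add; congr act.
have -> : gT g1 ** gmx_adj gS = gmx_opp gU by gauss_ring.
have -> : gmx_adj (gT g1) = gmx_opp (gS ** (gU ** gU)) by gauss_ring.
by rewrite !act_opp_gmx -act_mul act_PS act_opp; apply/eqP; rewrite -subr_eq0 opprK PU.
Qed.

Lemma act_P_relTi Y :
  act P Y + act P (gmx_adj (gT gI) ** gmx_adj gS ** Y) = act P (gmx_adj (gT gI) ** Y).
Proof.
rewrite -!(act_mul P _ Y) -act_add; congr act.
have -> : gmx_adj (gT gI) ** gmx_adj gS = gmx_adj gL ** gE by gauss_ring.
have -> : gmx_adj (gT gI) = gS ** gL ** (gE ** gE) by gauss_ring.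
rewrite -(act_mul P (gmx_adj gL)) act_P_adjL.
rewrite -(act_mul P (gS ** gL)) -(act_mul P gS) act_PS act_opp act_PL act_opp.
by apply/eqP; rewrite -subr_eq0 opprK PE.
Qed.

(* [psi g] is the would-be value [f(g)|g^-1] of the cocycle, computed along the
   Euclidean descent [g -> g T_n S], which strictly decreases [|c|^2]. *)
Fixpoint psi_fuel (fuel : nat) (g : gmx) : V :=
  if fuel is fuel'.+1 then
    if cnorm g == 0 then 0 else
    let h := g ** gT (nearest g) in psi_fuel fuel' (h ** gS) + act P (gmx_adj h)
  else 0.
Definition psi g := psi_fuel (absz (cnorm g)).+1 g.

Lemma cnorm_descent g n : reduces g n -> cnorm (g ** gT n ** gS) < cnorm g.
Proof. by rewrite cnormS. Qed.

Lemma psi_fuel_enough f1 f2 g : (absz (cnorm g) < f1)%N -> (absz (cnorm g) < f2)%N ->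
  psi_fuel f1 g = psi_fuel f2 g.
Proof.
elim: f1 f2 g => [|f1 IH] [|f2] g //= h1 h2.
case: ifP => // /negbT c0; congr (_ + _); apply: IH;
  have := cnorm_descent (nearest_reduces c0);
  have := cnorm_ge0 (g ** gT (nearest g) ** gS); lia.
Qed.

Definition psi_step g n := psi (g ** gT n ** gS) + act P (gmx_adj (g ** gT n)).

Lemma psi_unfold g : psi g = if cnorm g == 0 then 0 else psi_step g (nearest g).
Proof.
rewrite {1}/psi /=; case: ifP => // /negbT c0; congr (_ + _).
apply: psi_fuel_enough => //.
have := cnorm_descent (nearest_reduces c0).
have := cnorm_ge0 (g ** gT (nearest g) ** gS); lia.
Qed.

Lemma psi_cnorm0 g : cnorm g = 0 -> psi g = 0.
Proof. by move=> c0; rewrite psi_unfold c0 eqxx. Qed.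

Lemma psi_nearest g : cnorm g != 0 -> exists2 n, reduces g n & psi g = psi_step g n.
Proof.
move=> c0; exists (nearest g); first exact: nearest_reduces.
by rewrite psi_unfold (negbTE c0).
Qed.

Definition psi_indep g := forall n, reduces g n -> psi g = psi_step g n.
Definition psi_invariant g :=
  [/\ forall n, psi (g ** gT n) = psi g, psi (g ** gL) = psi g & psi (gmx_opp g) = psi g].
Definition psi_S_rule g := psi (g ** gS) = psi g - act P (gmx_adj g).

Lemma psi_S_rule_of_lt g : psi_indep g -> dnorm g < cnorm g -> psi_S_rule g.
Proof.
move=> ind lt; have r0 : reduces g g0.
  by rewrite /reduces; have -> : g ** gT g0 = g by gauss_ring.
have e : g ** gT g0 = g by gauss_ring.
by rewrite /psi_S_rule (ind _ r0) /psi_step e addrK.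
Qed.

Lemma psi_S_rule_of_gt g : cnorm g < dnorm g -> psi_indep (g ** gS) ->
  psi (gmx_opp g) = psi g -> psi_S_rule g.
Proof.
move=> lt ind psiN.
have := psi_S_rule_of_lt ind; rewrite dnormS cnormS /psi_S_rule => /(_ lt).
have -> : g ** gS ** gS = gmx_opp g by gauss_ring.
rewrite psiN gmx_adjM -act_mul act_P_adjS act_opp opprK => ->.
by rewrite addrK.
Qed.

Lemma psi_S_rule_viaL g : psi_invariant g -> psi_invariant (g ** gS ** gL) ->
  psi_invariant (g ** gS) -> psi_S_rule (g ** gL) -> psi_S_rule g.
Proof.
case=> _ psiL _ [_ _ psiN2] [_ psiL1 _]; rewrite /psi_S_rule.
have -> : g ** gL ** gS = gmx_opp (g ** gS ** gL) by gauss_ring.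
by rewrite psiN2 psiL1 psiL gmx_adjM -act_mul act_P_adjL.
Qed.

(* One level of the induction on [|c|^2]: the rules below [h] make [psi] independent of
   the rounding at level [h], and then give the rules at level [h]. *)
Section Descent.
Variable h : int.
Hypothesis inv_below : forall g, sl2 g -> cnorm g < h -> psi_invariant g.
Hypothesis S_rule_below : forall g, sl2 g -> cnorm g < h -> dnorm g < h -> psi_S_rule g.

Lemma psiT_below g n : sl2 g -> cnorm g < h -> psi (g ** gT n) = psi g.
Proof. by move=> dg hg; case: (inv_below dg hg). Qed.
Lemma psiL_below g : sl2 g -> cnorm g < h -> psi (g ** gL) = psi g.
Proof. by move=> dg hg; case: (inv_below dg hg). Qed.
Lemma psiN_below g : sl2 g -> cnorm g < h -> psi (gmx_opp g) = psi g.
Proof. by move=> dg hg; case: (inv_below dg hg). Qed.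

Ltac below := solve [sl2_auto | rewrite ?(cnormS, cnormT, cnormL, cnormN); lia].

Lemma psi_step_succ1 g n : sl2 g -> cnorm g = h ->
  reduces g n -> reduces g (gadd n g1) -> psi_step g n = psi_step g (gadd n g1).
Proof.
move=> dg hg; rewrite /reduces hg => rn rn1.
have dyT : dnorm (g ** gT n ** gS ** gT (gopp g1)) < h.
  by have -> : dnorm (g ** gT n ** gS ** gT (gopp g1)) = dnorm (g ** gT (gadd n g1)) by gauss_ring.
rewrite /psi_step.
have -> : g ** gT (gadd n g1) ** gS =
  gmx_opp (g ** gT n ** gS ** gT (gopp g1) ** gS ** gT (gopp g1)) by gauss_ring.
rewrite psiN_below; try below.
rewrite (psiT_below (g := g ** gT n ** gS ** gT (gopp g1) ** gS)); try below.
rewrite (S_rule_below (g := g ** gT n ** gS ** gT (gopp g1))); try below.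
rewrite (psiT_below (g := g ** gT n ** gS)); try below.
have -> : gmx_adj (g ** gT n ** gS ** gT (gopp g1)) = gT g1 ** gmx_adj gS ** gmx_adj (g ** gT n).
  by gauss_ring.
have -> : gmx_adj (g ** gT (gadd n g1)) = gmx_adj (gT g1) ** gmx_adj (g ** gT n) by gauss_ring.
by rewrite -act_P_relT [act P (gmx_adj _) + _]addrC addrA addrNK.
Qed.

Lemma psi_step_succI g n : sl2 g -> cnorm g = h ->
  reduces g n -> reduces g (gadd n gI) -> psi_step g n = psi_step g (gadd n gI).
Proof.
move=> dg hg; rewrite /reduces hg => rn rn1.
have dyT : dnorm (g ** gT n ** gS ** gT gI) < h.
  by have -> : dnorm (g ** gT n ** gS ** gT gI) = dnorm (g ** gT (gadd n gI)) by gauss_ring.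
rewrite /psi_step.
have -> : g ** gT (gadd n gI) ** gS =
  gmx_opp (g ** gT n ** gS ** gT gI ** gS ** gL ** gT gI) by gauss_ring.
rewrite psiN_below; try below.
rewrite (psiT_below (g := g ** gT n ** gS ** gT gI ** gS ** gL)); try below.
rewrite (psiL_below (g := g ** gT n ** gS ** gT gI ** gS)); try below.
rewrite (S_rule_below (g := g ** gT n ** gS ** gT gI)); try below.
rewrite (psiT_below (g := g ** gT n ** gS)); try below.
have -> : gmx_adj (g ** gT n ** gS ** gT gI) =
  gmx_adj (gT gI) ** gmx_adj gS ** gmx_adj (g ** gT n) by gauss_ring.
have -> : gmx_adj (g ** gT (gadd n gI)) = gmx_adj (gT gI) ** gmx_adj (g ** gT n) by gauss_ring.
by rewrite -act_P_relTi [act P (gmx_adj _) + _]addrC addrA addrNK.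
Qed.

Lemma psi_step_unit g n s t : sl2 g -> cnorm g = h -> s ^+ 2 + t ^+ 2 = 1 ->
  reduces g n -> reduces g (gadd n (Gauss s t)) -> psi_step g n = psi_step g (gadd n (Gauss s t)).
Proof.
move=> dg hg st rn rm.
have [s2 t2] : s ^+ 2 <= 1 /\ t ^+ 2 <= 1 by have := (sqr_ge0 s, sqr_ge0 t); case; lia.
case: (small_int s2) (small_int t2) => -> [] -> in st rm *; rewrite ?expr2 in st; try lia.
- have e : n = gadd (gadd n (Gauss (-1) 0)) g1 by gauss_ring.
  by rewrite [in LHS]e; symmetry; apply: psi_step_succ1; rewrite -?e.
- have e : n = gadd (gadd n (Gauss 0 (-1))) gI by gauss_ring.
  by rewrite [in LHS]e; symmetry; apply: psi_step_succI; rewrite -?e.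
- exact: psi_step_succI.
- exact: psi_step_succ1.
Qed.

Lemma psi_indep_at g : sl2 g -> cnorm g = h -> psi_indep g.
Proof.
move=> dg hg n rn.
have c0 : cnorm g != 0.
  by move: rn; rewrite /reduces; have := dnorm_ge0 (g ** gT n); lia.
rewrite psi_unfold (negbTE c0).
apply: (reduces_unit_path (Q := fun m => psi_step g (nearest g) = psi_step g m))
  (nearest_reduces c0) rn _ => // m s t st rm rms ->.
exact: psi_step_unit.
Qed.

Lemma psi_invariant_at g : sl2 g -> cnorm g = h -> psi_invariant g.
Proof.
move=> dg hg; have ind := psi_indep_at dg hg.
have [/eqP c0|c0] := boolP (cnorm g == 0).
  by split=> [n||]; rewrite !psi_cnorm0 ?cnormT ?cnormL ?cnormN.
split.
- move=> m; have := psi_nearest (g := g ** gT m); rewrite cnormT => /(_ c0) [n].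
  rewrite reducesT => r ->; rewrite (ind _ r) /psi_step.
  by have -> : g ** gT m ** gT n = g ** gT (gadd m n) by gauss_ring.
- have := psi_nearest (g := g ** gL); rewrite cnormL => /(_ c0) [n].
  rewrite reducesL => r ->; rewrite (ind _ r) /psi_step.
  move: r; rewrite /reduces hg => r.
  have -> : g ** gL ** gT n ** gS = gmx_opp (g ** gT (gopp n) ** gS ** gL) by gauss_ring.
  have -> : gmx_adj (g ** gL ** gT n) = gmx_adj gL ** gmx_adj (g ** gT (gopp n)) by gauss_ring.
  rewrite psiN_below; try below.
  rewrite (psiL_below (g := g ** gT (gopp n) ** gS)); try below.
  by rewrite -(act_mul P (gmx_adj gL)) act_P_adjL.
- have := psi_nearest (g := gmx_opp g); rewrite cnormN => /(_ c0) [n].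
  rewrite reducesN => r ->; rewrite (ind _ r) /psi_step.
  move: r; rewrite /reduces hg => r.
  have -> : gmx_opp g ** gT n ** gS = gmx_opp (g ** gT n ** gS) by gauss_ring.
  have -> : gmx_adj (gmx_opp g ** gT n) = gmx_opp (gmx_adj (g ** gT n)) by gauss_ring.
  by rewrite psiN_below ?act_opp_gmx; try below.
Qed.

Lemma psi_S_rule_eq1 g : sl2 g -> cnorm g = h -> dnorm g = h -> reduces g g1 ->
  psi_S_rule g.
Proof.
move=> dg hg hdg r1.
have rS : reduces (g ** gS) (gopp g1).
  move: r1; rewrite /reduces cnormS hdg -hg.
  by have -> : dnorm (g ** gS ** gT (gopp g1)) = dnorm (g ** gT g1) by gauss_ring.
have indS : psi_indep (g ** gS) by apply: psi_indep_at; [sl2_auto | rewrite cnormS].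
rewrite /psi_S_rule (indS _ rS) (psi_indep_at dg hg r1) /psi_step.
move: r1; rewrite /reduces hg => r1.
have -> : g ** gS ** gT (gopp g1) ** gS = gmx_opp (g ** gT g1 ** gS ** gT g1) by gauss_ring.
rewrite psiN_below; try below.
rewrite (psiT_below (g := g ** gT g1 ** gS)); try below.
have -> : gmx_adj (g ** gS ** gT (gopp g1)) = gT g1 ** gmx_adj gS ** gmx_adj g by gauss_ring.
have -> : gmx_adj (g ** gT g1) = gmx_adj (gT g1) ** gmx_adj g by gauss_ring.
by rewrite -act_P_relT [act P (gmx_adj g) + _]addrC addrA addrK.
Qed.

Lemma psi_S_rule_eqI g : sl2 g -> cnorm g = h -> dnorm g = h -> reduces g gI ->
  psi_S_rule g.
Proof.
move=> dg hg hdg ri.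
have e : dnorm (g ** gS ** gT gI) = dnorm (g ** gT gI) by gauss_ring.
have rS : reduces (g ** gS) gI by move: ri; rewrite /reduces cnormS hdg -hg e.
have indS : psi_indep (g ** gS) by apply: psi_indep_at; [sl2_auto | rewrite cnormS].
rewrite /psi_S_rule (indS _ rS) (psi_indep_at dg hg ri) /psi_step.
move: ri; rewrite /reduces hg -e => ri.
have -> : g ** gT gI ** gS = gmx_opp (g ** gS ** gT gI ** gS ** gL ** gT gI) by gauss_ring.
rewrite psiN_below; try below.
rewrite (psiT_below (g := g ** gS ** gT gI ** gS ** gL)); try below.
rewrite (psiL_below (g := g ** gS ** gT gI ** gS)); try below.
have -> : gmx_adj (g ** gS ** gT gI) = gmx_adj (gT gI) ** gmx_adj gS ** gmx_adj g by gauss_ring.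
have -> : gmx_adj (g ** gT gI) = gmx_adj (gT gI) ** gmx_adj g by gauss_ring.
by rewrite -act_P_relTi [act P (gmx_adj g) + _]addrC addrA addrK.
Qed.

Lemma psi_S_rule_at g : sl2 g -> cnorm g <= h -> dnorm g <= h -> psi_S_rule g.
Proof.
move=> dg hc hd.
have [/andP [lc ld]|/nandP] := boolP ((cnorm g < h) && (dnorm g < h)).
  exact: S_rule_below.
rewrite -!leNgt => nlt.
have [lt|] := boolP (dnorm g < cnorm g).
  by apply: (psi_S_rule_of_lt _ lt); apply: (psi_indep_at dg); lia.
rewrite -leNgt => le.
have [gt|] := boolP (cnorm g < dnorm g).
  apply: (psi_S_rule_of_gt gt); last by apply: (psiN_below dg); lia.
  by apply: psi_indep_at; [sl2_auto | rewrite cnormS; lia].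
rewrite -leNgt => ge.
have [hgc hgd] : cnorm g = h /\ dnorm g = h by lia.
have c0 : 0 < cnorm g.
  rewrite lt_neqAle cnorm_ge0 andbT; apply/eqP => c0.
  by apply: (sl2_cdnorm0 dg); lia.
have viaL : psi_S_rule (g ** gL) -> psi_S_rule g.
  by apply: psi_S_rule_viaL; apply: psi_invariant_at;
    rewrite ?cnormL ?cnormS //; sl2_auto.
have [dL hL hdL] : [/\ sl2 (g ** gL), cnorm (g ** gL) = h & dnorm (g ** gL) = h].
  by rewrite cnormL dnormL; split => //; sl2_auto.
case: (reduces_unit (etrans hgc (esym hgd)) c0) => r.
- exact: psi_S_rule_eq1.
- by apply/viaL/psi_S_rule_eq1; rewrite // reducesL.
- exact: psi_S_rule_eqI.
- by apply/viaL/psi_S_rule_eqI; rewrite // reducesL.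
Qed.

End Descent.

Definition psi_rules_below (h : int) :=
  (forall g, sl2 g -> cnorm g < h -> psi_invariant g) /\
  (forall g, sl2 g -> cnorm g < h -> dnorm g < h -> psi_S_rule g).

Lemma psi_rules_below_nat (n : nat) : psi_rules_below n.
Proof.
elim: n => [|n [inv S_rule]]; first by split=> g _ hc; have := cnorm_ge0 g; lia.
split=> g dg hc.
  have [lt|eq] : cnorm g < n \/ cnorm g = n by lia.
  - exact: inv.
  - exact: (psi_invariant_at inv S_rule dg eq).
move=> hd; apply: (psi_S_rule_at inv S_rule dg); lia.
Qed.

Lemma psi_rules g : sl2 g -> psi_invariant g /\ psi_S_rule g.
Proof.
move=> dg; have [inv S_rule] := psi_rules_below_nat (absz (cnorm g + dnorm g)).+1.
have [c0 d0] := (cnorm_ge0 g, dnorm_ge0 g).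
by split; [apply: inv | apply: S_rule]; rewrite //; lia.
Qed.

Lemma psi_1 : psi gmx1 = 0.
Proof. by apply: psi_cnorm0; gauss_ring. Qed.

Lemma psi_mul g h : sl2 g -> sl2 h -> psi (g ** h) = psi g + act (psi h) (gmx_adj g).
Proof.
move=> dg dh; move: g dg.
pose Pr h := sl2 h /\ forall g, sl2 g -> psi (g ** h) = psi g + act (psi h) (gmx_adj g).
suff /(_ h dh) [] : forall h, sl2 h -> Pr h by [].
apply: sl2_ind.
- by split=> [|g _]; [exact: sl2_1 | rewrite gmx_mul1 psi_1 act_0 addr0].
- move=> x [dx IH]; split=> [|g dg]; first by sl2_auto.
  have [[_ SR] [_ SRx]] := (psi_rules (sl2M dg dx), psi_rules dx).
  by rewrite gmx_mulA SR IH // SRx act_sub act_mul gmx_adjM addrA.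
- move=> x n [dx IH]; split=> [|g dg]; first by sl2_auto.
  have [[[T _ _] _] [[Tx _ _] _]] := (psi_rules (sl2M dg dx), psi_rules dx).
  by rewrite gmx_mulA T IH // Tx.
- move=> x [dx IH]; split=> [|g dg]; first by sl2_auto.
  have [[[_ L _] _] [[_ Lx _] _]] := (psi_rules (sl2M dg dx), psi_rules dx).
  by rewrite gmx_mulA L IH // Lx.
- move=> x [dx IH]; split=> [|g dg]; first by sl2_auto.
  have [[[_ _ N] _] [[_ _ Nx] _]] := (psi_rules (sl2M dg dx), psi_rules dx).
  by rewrite gmx_mulN N IH // Nx.
Qed.

Definition psi_cocycle g := act (psi g) g.

Lemma psi_cocycleM g h : sl2 g -> sl2 h ->
  psi_cocycle (g ** h) = act (psi_cocycle g) h + psi_cocycle h.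
Proof. by move=> dg dh; rewrite /psi_cocycle psi_mul // act_add !act_mul gmx_adjK. Qed.

Lemma psi_cocycleN g : sl2 g -> psi_cocycle (gmx_opp g) = psi_cocycle g.
Proof. by move=> dg; have [[_ _ N] _] := psi_rules dg; rewrite /psi_cocycle act_opp_gmx N. Qed.

Lemma psi_cocycleT n : psi_cocycle (gT n) = 0.
Proof. by rewrite /psi_cocycle psi_cnorm0 ?act_0 //; gauss_ring. Qed.

Lemma psi_cocycleL : psi_cocycle gL = 0.
Proof. by rewrite /psi_cocycle psi_cnorm0 ?act_0 //; gauss_ring. Qed.

Lemma psi_cocycleS : psi_cocycle gS = P.
Proof.
have [_ SR] := psi_rules sl2_1.
have e : gmx1 ** gS = gS by gauss_ring.
have adj1 : gmx_adj gmx1 = gmx1 by gauss_ring.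
by rewrite /psi_cocycle -{1}e SR psi_1 adj1 act_1 sub0r act_opp act_PS opprK.
Qed.

Lemma psi_cocycle_gmx : gmx_cocycle psi_cocycle.
Proof.
by split; [exact: psi_cocycleM | exact: psi_cocycleN | exact: psi_cocycleT
          | exact: psi_cocycleT | exact: psi_cocycleL].
Qed.

End Construction.

Lemma period_cocycle P : period_relations P -> exists2 F, gmx_cocycle F & F gS = P.
Proof. by case=> PS PL PU PE; exists (psi_cocycle P); [exact: psi_cocycle_gmx | exact: psi_cocycleS]. Qed.

End GmxCocycles.

Section ComplexModel.
Variable R : realType.
Local Open Scope complex_scope.
Local Notation C := R[i].

Definition gaussC (x : gauss) : C := Complex (gre x)%:~R (gim x)%:~R.

Lemma gaussC_add x y : gaussC (gadd x y) = gaussC x + gaussC y.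
Proof. by rewrite /gaussC /= !intrD. Qed.
Lemma gaussC_mul x y : gaussC (gmul x y) = gaussC x * gaussC y.
Proof. by rewrite /gaussC /= !(intrD, intrM, intrN). Qed.
Lemma gaussC_opp x : gaussC (gopp x) = - gaussC x.
Proof. by rewrite /gaussC /= !intrN. Qed.
Lemma gaussC_inj : injective gaussC.
Proof. by case=> [a b] [c d] [/intr_inj -> /intr_inj ->]. Qed.

Lemma mx2_mul (a b c d a' b' c' d' : C) :
  mx2 a b c d *m mx2 a' b' c' d' =
  mx2 (a * a' + b * c') (a * b' + b * d') (c * a' + d * c') (c * b' + d * d').
Proof.
apply/matrixP => i j; rewrite !mxE big_ord_recl big_ord1 !mxE.
by case: i => [[|[|?]] ?] //=; case: j => [[|[|?]] ?].
Qed.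

Lemma mx2_eta (x : 'M[C]_2) : x = mx2 (x 0 0) (x 0 1) (x 1 0) (x 1 1).
Proof.
apply/matrixP => i j; rewrite mxE.
by case: i => [[|[|?]] hi] //=; case: j => [[|[|?]] hj] //=; congr (x _ _); exact: val_inj.
Qed.

Lemma det_mx2 (a b c d : C) : \det (mx2 a b c d) = a * d - b * c.
Proof.
rewrite (expand_det_row _ 0) big_ord_recl big_ord1 /cofactor !det_mx11 !mxE /=.
by rewrite /bump /= expr0 expr1 mul1r mulN1r mulrN.
Qed.

Definition gmxC (g : gmx) : 'M[C]_2 :=
  mx2 (gaussC (ma g)) (gaussC (mb g)) (gaussC (mc g)) (gaussC (md g)).

Lemma gmxC_mul g h : gmxC (g ** h) = gmxC g *m gmxC h.
Proof. by rewrite /gmxC mx2_mul /= !(gaussC_add, gaussC_mul). Qed.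

Lemma gmxC_opp g : gmxC (gmx_opp g) = - gmxC g.
Proof.
apply/matrixP => i j; rewrite !mxE /=.
by case: (val i == 0)%N; case: (val j == 0)%N; rewrite gaussC_opp.
Qed.

Lemma gmxC1 : gmxC gmx1 = 1%:M.
Proof. by apply/matrixP => -[[|[|?]] ?] [[|[|?]] ?]; rewrite !mxE. Qed.

Lemma det_gmxC g : \det (gmxC g) = gaussC (gmx_det g).
Proof. by rewrite det_mx2 /gmx_det gaussC_add gaussC_opp !gaussC_mul. Qed.

Lemma Smx_gmxC : Smx R = gmxC gS. Proof. by rewrite /Smx /gmxC /= gaussC_opp. Qed.
Lemma Tmx_gmxC : Tmx R = gmxC (gT g1). Proof. by []. Qed.
Lemma Twmx_gmxC : Twmx R = gmxC (gT gI). Proof. by []. Qed.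
Lemma Lmx_gmxC : Lmx R = gmxC gL. Proof. by rewrite /Lmx /gmxC /= gaussC_opp. Qed.
Lemma Umx_gmxC : Umx R = gmxC gU.
Proof. by rewrite /Umx Tmx_gmxC Smx_gmxC gmxC_mul. Qed.
Lemma Emx_gmxC : Emx R = gmxC gE.
Proof. by rewrite /Emx Twmx_gmxC Smx_gmxC Lmx_gmxC !gmxC_mul. Qed.

Definition gauss_of (z : C) : gauss := Gauss (Num.floor (complex.Re z)) (Num.floor (complex.Im z)).
Definition gmx_of (x : 'M[C]_2) : gmx :=
  Gmx (gauss_of (x 0 0)) (gauss_of (x 0 1)) (gauss_of (x 1 0)) (gauss_of (x 1 1)).

Lemma gaussCK : cancel gaussC gauss_of.
Proof. by case=> a b; rewrite /gauss_of /gaussC /= !intrKfloor. Qed.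

Lemma gauss_ofK z : gaussInt z -> gaussC (gauss_of z) = z.
Proof. by case=> a [b ->]; rewrite -[Complex _ _]/(gaussC (Gauss a b)) gaussCK. Qed.

Lemma gmxCK : cancel gmxC gmx_of.
Proof. by case=> a b c d; rewrite /gmx_of /gmxC !mxE /= !gaussCK. Qed.

Lemma gmx_ofK x : inSL2Zi x -> gmxC (gmx_of x) = x.
Proof. by case=> hx _; rewrite [RHS]mx2_eta /gmxC /gmx_of /= !gauss_ofK. Qed.

Lemma sl2_gmx_of x : inSL2Zi x -> sl2 (gmx_of x).
Proof. by move=> hx; apply: gaussC_inj; rewrite -det_gmxC gmx_ofK //; case: hx. Qed.

Lemma inSL2Zi_gmxC g : sl2 g -> inSL2Zi (gmxC g).
Proof.
move=> dg; split; last by rewrite det_gmxC dg.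
by move=> i j; rewrite mxE; case: (val i == 0)%N; case: (val j == 0)%N; do 2!eexists.
Qed.

(* [homog_eval n u v p] substitutes the forms [u, v] into the degree-[n]
   homogenisation of [p], i.e. it is [v^n p(u/v)]. *)
Definition homog_eval (n : nat) (u v p : {poly C}) : {poly C} :=
  \sum_(l < n.+1) p`_l *: (u ^+ l * v ^+ (n - l)).

Lemma homog_evalD n (u v p q : {poly C}) :
  homog_eval n u v (p + q) = homog_eval n u v p + homog_eval n u v q.
Proof. by rewrite /homog_eval -big_split /=; apply: eq_bigr => l _; rewrite coefD scalerDl. Qed.

Lemma homog_evalZ n (u v : {poly C}) (a : C) (p : {poly C}) :
  homog_eval n u v (a *: p) = a *: homog_eval n u v p.
Proof. by rewrite /homog_eval scaler_sumr; apply: eq_bigr => l _; rewrite coefZ scalerA. Qed.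

Lemma homog_evalS n (u v p : {poly C}) : (size p <= n.+1)%N ->
  homog_eval n.+1 u v p = v * homog_eval n u v p.
Proof.
move=> sp; rewrite /homog_eval big_ord_recr /= nth_default // scale0r addr0.
rewrite mulr_sumr; apply: eq_bigr => l _ /=.
have ln : (l <= n)%N by rewrite -ltnS.
by rewrite -scalerAr subSn // exprS mulrCA.
Qed.

Lemma homog_evalX n (u v p : {poly C}) : (size p <= n.+1)%N ->
  homog_eval n.+1 u v ('X * p) = u * homog_eval n u v p.
Proof.
move=> sp; rewrite /homog_eval big_ord_recl coefXM /= scale0r add0r mulr_sumr.
by apply: eq_bigr => l _ /=; rewrite coefXM /= subSS -scalerAr exprS mulrA.
Qed.

Lemma size_linear_mul (a b : C) (p : {poly C}) :
  (size ((a *: 'X + b%:P) * p)%R <= (size p).+1)%N.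
Proof.
have sl : (size (a *: 'X + b%:P)%R <= 2)%N.
  rewrite (leq_trans (size_polyD _ _)) // geq_max.
  by rewrite (leq_trans (size_scale_leq _ _)) ?size_polyX // (leq_trans (size_polyC_leq1 _)).
rewrite (leq_trans (size_polyMleq _ _)) //.
by move: sl; set x := size (a *: 'X + b%:P)%R; set y := size p; clearbody x y; lia.
Qed.

Lemma size_linear_exp (a b : C) j : (size ((a *: 'X + b%:P) ^+ j)%R <= j.+1)%N.
Proof.
elim: j => [|j IH]; first by rewrite expr0 size_poly1.
by rewrite exprS (leq_trans (size_linear_mul _ _ _)).
Qed.

Lemma size_linear_prod (a b c e : C) i j :
  (size ((a *: 'X + b%:P) ^+ i * (c *: 'X + e%:P) ^+ j)%R <= (i + j).+1)%N.
Proof.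
elim: i => [|i IH]; first by rewrite expr0 mul1r add0n size_linear_exp.
by rewrite exprS -mulrA (leq_trans (size_linear_mul _ _ _)).
Qed.

Lemma homog_eval_linear_mul n (u v : {poly C}) (a b : C) (p : {poly C}) :
  (size p <= n.+1)%N ->
  homog_eval n.+1 u v ((a *: 'X + b%:P) * p) = (a *: u + b *: v) * homog_eval n u v p.
Proof.
move=> sp; rewrite mulrDl -scalerAl mul_polyC homog_evalD !homog_evalZ.
by rewrite homog_evalX // homog_evalS // mulrDl -!scalerAl.
Qed.

Lemma homog_eval_linear_prod (u v : {poly C}) (a b c e : C) i j :
  homog_eval (i + j) u v ((a *: 'X + b%:P) ^+ i * (c *: 'X + e%:P) ^+ j) =
  (a *: u + b *: v) ^+ i * (c *: u + e *: v) ^+ j.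
Proof.
elim: i => [|i IHi].
  rewrite !expr0 !mul1r add0n; elim: j => [|j IHj].
    by rewrite !expr0 /homog_eval big_ord1 coef1 /= !expr0 mulr1 scale1r.
  by rewrite !exprS homog_eval_linear_mul ?IHj // size_linear_exp.
by rewrite !exprS -!mulrA addSn homog_eval_linear_mul ?IHi // size_linear_prod.
Qed.

Lemma scale_linear_add (a b a' b' c' e' : C) :
  a *: (a' *: 'X + b'%:P) + b *: (c' *: 'X + e'%:P) =
  (a * a' + b * c') *: 'X + (a * b' + b * e')%:P.
Proof. by rewrite !scalerDr !scalerA !scale_polyC scalerDl polyCD addrACA. Qed.

Variable k : nat.

Definition slash_mx (g : 'M[C]_2) : 'M[C]_k.+1 :=
  \matrix_(i < k.+1, m < k.+1) (slash_factor k (g 0 0) (g 0 1) (g 1 0) (g 1 1) i)`_m.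

Lemma mulmx2E (g h : 'M[C]_2) i j : (g *m h) i j = g i 0 * h 0 j + g i 1 * h 1 j.
Proof.
rewrite mxE big_ord_recl big_ord1.
by have -> : lift ord0 (@ord0 0) = 1 :> 'I_2 by apply: val_inj.
Qed.

Lemma slash_mxM (g h : 'M[C]_2) : slash_mx (g *m h) = slash_mx g *m slash_mx h.
Proof.
apply/matrixP => i m; rewrite [LHS]mxE [RHS]mxE.
set u := h 0 0 *: 'X + (h 0 1)%:P; set v := h 1 0 *: 'X + (h 1 1)%:P.
have -> : \sum_j slash_mx g i j * slash_mx h j m =
    (homog_eval k u v (slash_factor k (g 0 0) (g 0 1) (g 1 0) (g 1 1) i))`_m.
  by rewrite /homog_eval coef_sum; apply: eq_bigr => l _; rewrite !mxE coefZ.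
have ik : (i <= k)%N by rewrite -ltnS.
have -> : homog_eval k u v = homog_eval (i + (k - i)) u v by rewrite subnKC.
by rewrite /slash_factor homog_eval_linear_prod /u /v !scale_linear_add !mulmx2E.
Qed.

Lemma slash_mx1 : slash_mx 1%:M = 1%:M.
Proof.
apply/matrixP => i m; rewrite !mxE /slash_factor ?mxE /=.
by rewrite scale1r scale0r addr0 add0r expr1n mulr1 coefXn eq_sym.
Qed.

Lemma slash_mxN (g : 'M[C]_2) : slash_mx (- g) = (-1) ^+ k *: slash_mx g.
Proof.
apply/matrixP => i m; rewrite !mxE /slash_factor !scaleNr !polyCN -!opprD.
rewrite [(- (_ + _)) ^+ i]exprNn [(- (_ + _)) ^+ (k - i)]exprNn mulrACA -exprD.
have ik : (i <= k)%N by rewrite -ltnS.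
by rewrite subnKC // -polyCN -polyC_exp coefCM.
Qed.

Lemma slashE (P : Vkk R k) (g : 'M[C]_2) :
  slash P g = (slash_mx g)^T *m P *m slash_mx (map_mx conjc g).
Proof.
apply/matrixP => m n; rewrite !mxE.
under [RHS]eq_bigr => j _ do rewrite !mxE big_distrl /=.
rewrite exchange_big /=; apply: eq_bigr => i _; apply: eq_bigr => j _.
by rewrite !mxE; congr (_ * _); exact: mulrC.
Qed.

Lemma slash_mul (P : Vkk R k) (g h : 'M[C]_2) : slash (slash P g) h = slash P (g *m h).
Proof. by rewrite !slashE map_mxM !slash_mxM !trmx_mul !mulmxA. Qed.

Lemma slashD (P Q : Vkk R k) (g : 'M[C]_2) : slash (P + Q) g = slash P g + slash Q g.
Proof. by rewrite !slashE mulmxDr mulmxDl. Qed.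

Lemma slashZ (a : C) (P : Vkk R k) (g : 'M[C]_2) : slash (a *: P) g = a *: slash P g.
Proof. by rewrite !slashE -scalemxAr -scalemxAl. Qed.

Lemma slash1 (P : Vkk R k) : slash P 1%:M = P.
Proof. by rewrite slashE map_mx1 slash_mx1 trmx1 mul1mx mulmx1. Qed.

Lemma slashN (P : Vkk R k) (g : 'M[C]_2) : slash P (- g) = slash P g.
Proof.
rewrite !slashE map_mxN !slash_mxN -scalemxAr [(_ *: _)^T]linearZ /= -!scalemxAl scalerA.
by rewrite -exprD addnn -mul2n exprM sqrrN !expr1n scale1r.
Qed.

Definition gslash (P : Vkk R k) (g : gmx) := slash P (gmxC g).

Lemma gslashD u v g : gslash (u + v) g = gslash u g + gslash v g.
Proof. exact: slashD. Qed.
Lemma gslash_mul v g h : gslash (gslash v g) h = gslash v (g ** h).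
Proof. by rewrite /gslash slash_mul gmxC_mul. Qed.
Lemma gslash1 v : gslash v gmx1 = v.
Proof. by rewrite /gslash gmxC1 slash1. Qed.
Lemma gslashN v g : gslash v (gmx_opp g) = gslash v g.
Proof. by rewrite /gslash gmxC_opp slashN. Qed.

Lemma inCp_gmx_cocycle (f : 'M[C]_2 -> Vkk R k) : inCp f -> gmx_cocycle gslash (f \o gmxC).
Proof.
case=> fN fM fT fTi fL; split => /=.
- by move=> g h dg dh; rewrite gmxC_mul fM //; exact: inSL2Zi_gmxC.
- by move=> g dg; rewrite gmxC_opp fN //; exact: inSL2Zi_gmxC.
- by rewrite -Tmx_gmxC.
- by rewrite -Twmx_gmxC.
- by rewrite -Lmx_gmxC.
Qed.

Lemma inW_period_relations (P : Vkk R k) : inW P <-> period_relations gslash P.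
Proof.
rewrite /inW /period_relations /gslash Smx_gmxC Lmx_gmxC Umx_gmxC Emx_gmxC -!gmxC_mul.
by [].
Qed.

Lemma inCp_inW (f : 'M[C]_2 -> Vkk R k) : inCp f -> inW (f (Smx R)).
Proof.
move=> /inCp_gmx_cocycle cf; apply/inW_period_relations; rewrite Smx_gmxC.
exact: (cocycle_period gslashD gslash_mul gslash1 cf).
Qed.

Lemma inCp_lincomb (f g : 'M[C]_2 -> Vkk R k) (a : C) :
  inCp f -> inCp g -> inCp (fun x => a *: f x + g x).
Proof.
case=> fN fM fT fTi fL [gN gM gT gTi gL]; split.
- by move=> x hx; rewrite fN ?gN.
- by move=> x y hx hy; rewrite fM ?gM // slashD slashZ scalerDr addrACA.
- by rewrite fT gT scaler0 addr0.
- by rewrite fTi gTi scaler0 addr0.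
- by rewrite fL gL scaler0 addr0.
Qed.

Lemma inCp_eq (f g : 'M[C]_2 -> Vkk R k) : inCp f -> inCp g ->
  f (Smx R) = g (Smx R) -> forall x, inSL2Zi x -> f x = g x.
Proof.
move=> cf cg eS x hx.
have /inCp_gmx_cocycle cd := inCp_lincomb (-1) cg cf.
have S0 : (-1) *: g (gmxC gS) + f (gmxC gS) = 0 by rewrite -Smx_gmxC eS scaleN1r addNr.
have /eqP := cocycle_eq0 gslashD gslash1 cd S0 (sl2_gmx_of hx).
by rewrite /= gmx_ofK // scaleN1r addrC subr_eq0 => /eqP.
Qed.

Lemma inW_inCp (P : Vkk R k) : inW P -> exists f, inCp f /\ f (Smx R) = P.
Proof.
move=> /inW_period_relations.
case/(period_cocycle gslashD gslash_mul gslash1 gslashN) => F [FM FN FT FTi FL] FS.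
exists (F \o gmx_of); split; last by rewrite /= Smx_gmxC gmxCK.
split => /=.
- by move=> x hx; rewrite -{1}(gmx_ofK hx) -gmxC_opp gmxCK (FN _ (sl2_gmx_of hx)).
- move=> x y hx hy; rewrite -{1}(gmx_ofK hx) -{1}(gmx_ofK hy) -gmxC_mul gmxCK.
  by rewrite (FM _ _ (sl2_gmx_of hx) (sl2_gmx_of hy)) /gslash gmx_ofK.
- by rewrite Tmx_gmxC gmxCK.
- by rewrite Twmx_gmxC gmxCK.
- by rewrite Lmx_gmxC gmxCK.
Qed.

End ComplexModel.

Unset Implicit Arguments.

Theorem proposition5p1 (R : realType) (k : nat) (hk : odd k) :
  (* well-defined: f(S) lies in W_{k,k} *)
  (forall f : 'M[R[i]]_2 -> Vkk R k, inCp f -> inW (f (Smx R))) /\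
  (* C_p is a C-subspace (evaluation at S is then evidently C-linear) *)
  (forall (f g : 'M[R[i]]_2 -> Vkk R k) (a : R[i]),
      inCp f -> inCp g -> inCp (fun x => a *: f x + g x)) /\
  (* injective: as maps on PSL(2,Z[i]) *)
  (forall f g : 'M[R[i]]_2 -> Vkk R k, inCp f -> inCp g ->
      f (Smx R) = g (Smx R) -> forall x, inSL2Zi x -> f x = g x) /\
  (* surjective onto W_{k,k} *)
  (forall P : Vkk R k, inW P -> exists f, inCp f /\ f (Smx R) = P).
Proof.
split; first exact: inCp_inW.
split; first exact: inCp_lincomb.
split; first exact: inCp_eq.
exact: inW_inCp.
Qed.
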